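(* Let $h\in\mathcal H$ and $\varphi(\underline{x})=h(x_0,x_1)$ on $X=[0,1]^{\mathbb N_0}$. Let $a,b\in\mathrm{m}_h$ be such that $a$ and $b$ do not belong to the same connected component of $\mathrm{m}_h$. Then $H_\varphi(a^\infty,b^\infty)+H_\varphi(b^\infty,a^\infty)\neq0$, i.e. $a^\infty\not\sim_\varphi b^\infty$.
   Context: $X=[0,1]^{\mathbb N_0}$ with metric $d_X(\underline{x},\underline{y})=\sum_{i\ge0}|x_i-y_i|/2^{i+1}$ and shift $\sigma(\underline{x})_i=x_{i+1}$. $\alpha_\varphi=\inf_\mu\int\varphi\,d\mu$ over $\sigma$-invariant Borel probability measures. $B(\underline{x},\underline{y},n;\varepsilon)=\{\underline{z}: d_X(\underline{x},\underline{z})<\varepsilon,\ d_X(\sigma^n\underline{z},\underline{y})<\varepsilon\}$; Peierls barrier $H_\varphi(\underline{x},\underline{y})=\lim_{\varepsilon\to0}\liminf_{n\to\infty}\inf\{\sum_{i=0}^{n-1}(\varphi(\sigma^i\underline{z})-\alpha_\varphi): \underline{z}\in B(\underline{x},\underline{y},n;\varepsilon)\}\in\mathbb R\cup\{+\infty\}$. For points of the Aubry set, $\underline{x}\sim_\varphi\underline{y}$ means $H_\varphi(\underline{x},\underline{y})+H_\varphi(\underline{y},\underline{x})=0$. $h^*=\min_x h(x,x)$, $\mathrm{m}_h=\{a: h(a,a)=h^*\}$, $a^\infty=aaa\ldots$. A finite sequence $(x_k,\dots,x_l)$ is minimal (for $h$) if $\sum_{i=k}^{l-1}h(x_i,x_{i+1})\le\sum_{i=k}^{l-1}h(y_i,y_{i+1})$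 for every $(y_k,\dots,y_l)$ in $[0,1]$ with the same endpoints. $\mathcal H$ is the set of Lipschitz $h:[0,1]^2\to\mathbb R$ such that (H3) if $\xi_1<\xi_2$, $\eta_1<\eta_2$ then $h(\xi_1,\eta_1)+h(\xi_2,\eta_2)<h(\xi_1,\eta_2)+h(\xi_2,\eta_1)$; and (H4) if $(x_{-1},x_0,x_1)\ne(x'_{-1},x_0,x'_1)$ are both minimal then $(x_{-1}-x'_{-1})(x_1-x'_1)<0$. *)

From HB Require Import structures.
From mathcomp Require Import all_boot all_order all_algebra.
From mathcomp Require Import all_classical all_reals all_analysis.
Set Implicit Arguments. Unset Strict Implicit. Unset Printing Implicit Defensive.
Import Order.TTheory GRing.Theory Num.Theory.
Import numFieldNormedType.Exports.
Local Open Scope classical_set_scope.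
Local Open Scope ring_scope.

Section Defs.
Variable R : realType.

Definition X := {x : nat -> R | forall i, 0 <= x i <= 1}.

Lemma zero_in01 : forall i : nat, 0 <= (fun _ : nat => (0:R)) i <= 1.
Proof. by move=> i; rewrite lexx ler01. Qed.

HB.instance Definition _ := gen_eqMixin X.
HB.instance Definition _ := gen_choiceMixin X.
HB.instance Definition _ := isPointed.Build X (exist _ (fun _ => 0) zero_in01).

Definition xcoord (x : X) (i : nat) : R := proj1_sig x i.

Definition dX (x y : X) : R :=
  limn (series (fun i : nat => `|xcoord x i - xcoord y i| / 2 ^+ i.+1)).

Lemma shift_in01 (x : X) : forall i, 0 <= xcoord x i.+1 <= 1.
Proof. by move=> i; exact: (proj2_sig x i.+1). Qed.

Definition shift (x : X) : X := exist _ (fun i => xcoord x i.+1) (shift_in01 x).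

Definition dX_open (A : set X) : Prop :=
  forall x, A x -> exists2 e : R, 0 < e & forall z, dX x z < e -> A z.

Definition XB := g_sigma_algebraType dX_open.

Definition invariant (mu : probability XB R) : Prop :=
  forall A : set XB, measurable A -> mu (@shift @^-1` A) = mu A.

(* alpha_phi = inf_mu \int phi dmu (finite for continuous phi on compact X) *)
Definition alpha (phi : X -> R) : R :=
  fine (ereal_inf [set (\int[mu]_(x in [set: XB]) (phi x)%:E)%E
                  | mu in [set mu : probability XB R | invariant mu]]).

Definition Bset (x y : X) (n : nat) (eps : R) : set X :=
  [set z | dX x z < eps /\ dX (iter n shift z) y < eps].

Definition Binf (phi : X -> R) (x y : X) (eps : R) (n : nat) : \bar R :=
  ereal_inf [set (\sum_(0 <= i < n) (phi (iter i shift z) - alpha phi))%:E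
            | z in Bset x y n eps].

Definition peierls (phi : X -> R) (x y : X) : \bar R :=
  lim ((fun eps : R => limn_einf (Binf phi x y eps)) @ 0^'+).

Definition phi_of (h : R -> R -> R) (x : X) : R := h (xcoord x 0) (xcoord x 1).

Definition in01 (t : R) : Prop := 0 <= t <= 1.

Definition lipschitz01 (h : R -> R -> R) : Prop :=
  exists L : R, forall x1 y1 x2 y2, in01 x1 -> in01 y1 -> in01 x2 -> in01 y2 ->
    `|h x1 y1 - h x2 y2| <= L * (`|x1 - x2| + `|y1 - y2|).

Definition H3 (h : R -> R -> R) : Prop :=
  forall xi1 xi2 eta1 eta2, in01 xi1 -> in01 xi2 -> in01 eta1 -> in01 eta2 ->
    xi1 < xi2 -> eta1 < eta2 ->
    h xi1 eta1 + h xi2 eta2 < h xi1 eta2 + h xi2 eta1.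

Definition minimal (h : R -> R -> R) (k l : nat) (x : nat -> R) : Prop :=
  (forall i, (k <= i <= l)%N -> in01 (x i)) /\
  forall y : nat -> R, (forall i, (k <= i <= l)%N -> in01 (y i)) ->
    y k = x k -> y l = x l ->
    \sum_(k <= i < l) h (x i) (x i.+1) <= \sum_(k <= i < l) h (y i) (y i.+1).

(* (H4), triples (x_{-1},x_0,x_1) written as (u,v,w) *)
Definition H4 (h : R -> R -> R) : Prop :=
  forall u v w u' w' : R,
    minimal h 0 2 (fun i => nth 0 [:: u; v; w] i) ->
    minimal h 0 2 (fun i => nth 0 [:: u'; v; w'] i) ->
    (u, w) <> (u', w') -> (u - u') * (w - w') < 0.

Definition classH (h : R -> R -> R) : Prop := lipschitz01 h /\ H3 h /\ H4 h.

Definition m_h (h : R -> R -> R) : set R :=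
  [set a | in01 a /\ forall t, in01 t -> h a a <= h t t].

End Defs.

From Pilot Require Import Defs.
From HB Require Import structures.
From mathcomp Require Import all_boot all_order all_algebra.
From mathcomp Require Import all_classical all_reals all_analysis.
From mathcomp Require Import measurable_realfun.
From mathcomp.algebra_tactics Require Import ring lra.
Import Order.TTheory GRing.Theory Num.Theory.
Import numFieldNormedType.Exports.
Local Open Scope classical_set_scope.
Local Open Scope ring_scope.

(* Between a and b the diagonal t |-> h t t rises above its minimum h a a, so
   it exceeds h a a + g on some ridge [c1, c2].  An orbit segment from near
   a^oo to near b^oo and one coming back glue, up to a Lipschitz error, into a
   closed chain of points of [0, 1] that starts below c1 and reaches above c2.
   By (H3) a closed chain costs at least the sum of its diagonal values: peel
   off its largest point repeatedly, each time paying h M M plus a Monge gap.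
   Either the chain stops on the ridge, paying g, or it jumps over it, and
   one of the Monge gaps is at least that of [c1, c2]^2.  Since the Dirac mass
   at a^oo is invariant, alpha <= h a a, so the two actions add up to a fixed
   positive amount, which rules out H(a, b) + H(b, a) = 0. *)

Lemma in1_perm {T : eqType} {P : T -> Prop} {s1 s2 : seq T} :
  perm_eq s1 s2 -> {in s1, forall t, P t} -> {in s2, forall t, P t}.
Proof. by move=> s12 Ps t; rewrite -(perm_mem s12); exact: Ps. Qed.

Lemma in1_cons {T : eqType} {P : T -> Prop} {x : T} {s : seq T} :
  {in x :: s, forall t, P t} -> P x /\ {in s, forall t, P t}.
Proof. by move=> Ps; split=> [|t ts]; apply: Ps; rewrite in_cons ?eqxx ?ts ?orbT. Qed.

Section MongeCycles.
Context {R : realType} (h : R -> R -> R).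
Hypothesis hH3 : H3 h.

Definition monge_gap (x1 x2 y1 y2 : R) := h x1 y2 + h x2 y1 - h x1 y1 - h x2 y2.

Lemma monge_gap_ge0 {x1 x2 y1 y2 : R} : in01 x1 -> in01 x2 -> in01 y1 -> in01 y2 ->
  x1 <= x2 -> y1 <= y2 -> 0 <= monge_gap x1 x2 y1 y2.
Proof.
move=> x1i x2i y1i y2i; rewrite /monge_gap le_eqVlt => /predU1P[-> _|lt_x]; first lra.
rewrite le_eqVlt => /predU1P[->|lt_y]; first lra.
by have := hH3 _ _ _ _ x1i x2i y1i y2i lt_x lt_y; lra.
Qed.

Lemma monge_gap_gt0 x1 x2 : in01 x1 -> in01 x2 -> x1 < x2 ->
  0 < monge_gap x1 x2 x1 x2.
Proof.
by move=> x1i x2i lt_x; have := hH3 _ _ _ _ x1i x2i x1i x2i lt_x lt_x; rewrite /monge_gap; lra.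
Qed.

(* The gap is additive on rectangles, so it can only grow when
   [c1, c2] x [c1, c2] is enlarged to [x1, x2] x [y1, y2]. *)
Lemma monge_gap_widen {c1 c2 x1 x2 y1 y2 : R} : in01 c1 -> in01 c2 ->
  in01 x1 -> in01 x2 -> in01 y1 -> in01 y2 ->
  x1 <= c1 -> c1 <= c2 -> c2 <= x2 -> y1 <= c1 -> c2 <= y2 ->
  monge_gap c1 c2 c1 c2 <= monge_gap x1 x2 y1 y2.
Proof.
move=> c1i c2i x1i x2i y1i y2i xc1 c12 c2x yc1 c2y.
have y12 : y1 <= y2 by rewrite (le_trans yc1) // (le_trans c12).
have := monge_gap_ge0 x1i c1i y1i y2i xc1 y12.
have := monge_gap_ge0 c2i x2i y1i y2i c2x y12.
have := monge_gap_ge0 c1i c2i y1i c1i c12 yc1.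
have := monge_gap_ge0 c1i c2i c2i y2i c12 c2y.
rewrite /monge_gap; lra.
Qed.

Fixpoint path_cost (x : R) (s : seq R) : R :=
  if s is y :: s' then h x y + path_cost y s' else 0.

Definition cycle_cost (s : seq R) : R :=
  if s is x :: s' then path_cost x (rcons s' x) else 0.

Definition diag_cost (s : seq R) : R := \sum_(t <- s) h t t.

Lemma path_cost_cat x s1 s2 :
  path_cost x (s1 ++ s2) = path_cost x s1 + path_cost (last x s1) s2.
Proof. by elim: s1 x => [|y s1 IH] x /=; rewrite ?add0r // IH addrA. Qed.

Lemma path_cost_rcons x s y :
  path_cost x (rcons s y) = path_cost x s + h (last x s) y.
Proof. by rewrite -cats1 path_cost_cat /= addr0. Qed.

Lemma path_cost_map_iota (f : nat -> R) k n :
  path_cost (f k) [seq f i | i <- iota k.+1 n] = \sum_(k <= i < k + n) h (f i) (f i.+1).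
Proof.
elim: n k => [|n IH] k; first by rewrite addn0 big_geq.
by rewrite /= IH addSnnS [in RHS]big_ltn // -addSnnS leq_addr.
Qed.

Lemma cycle_cost_rot1 x s : cycle_cost (x :: s) = cycle_cost (rcons s x).
Proof.
case: s => [|y s] //=.
by rewrite !path_cost_rcons last_rcons; ring.
Qed.

Lemma cycle_cost_catC s1 s2 : cycle_cost (s1 ++ s2) = cycle_cost (s2 ++ s1).
Proof.
elim: s1 s2 => [|x s1 IH] s2; first by rewrite cats0.
by rewrite cat_cons cycle_cost_rot1 rcons_cat IH -cats1 -catA.
Qed.

Lemma cycle_cost_cat2 x s y t : cycle_cost (x :: s ++ y :: t) =
  path_cost x s + h (last x s) y + path_cost y t + h (last y t) x.
Proof. by rewrite /= rcons_cat path_cost_cat /= path_cost_rcons !addrA. Qed.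

Lemma cycle_cost_peel M y s : cycle_cost (M :: y :: s) =
  h M M + cycle_cost (y :: s) + monge_gap (last y s) M y M.
Proof. by rewrite /= !path_cost_rcons /monge_gap; ring. Qed.

Lemma cycle_cost_rot n s : cycle_cost (rot n s) = cycle_cost s.
Proof. by rewrite /rot cycle_cost_catC cat_take_drop. Qed.

Lemma exists_seq_max (s : seq R) : s != [::] ->
  exists2 M, M \in s & {in s, forall t, t <= M}.
Proof.
case: s => // x s _; exists (\big[Num.max/x]_(t <- s) t).
  rewrite big_seq; elim/big_ind: _ => [|u v ux vx|t ts]; rewrite ?mem_head //.
    by rewrite /Num.max; case: ifP.
  by rewrite in_cons ts orbT.
move=> t; rewrite in_cons => /predU1P[->|ts]; first exact: bigmax_ge_id.
exact: le_bigmax_seq.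
Qed.

Lemma cycle_peel_max s : (1 < size s)%N -> exists M y s',
  [/\ perm_eq s (M :: y :: s'), {in M :: y :: s', forall t, t <= M} &
      cycle_cost s = h M M + cycle_cost (y :: s') + monge_gap (last y s') M y M].
Proof.
move=> s_gt1; have [|M /rot_to[i [|y s'] rotE] maxM] := exists_seq_max s.
- by case: s s_gt1.
- by move: s_gt1; rewrite -(size_rot i) rotE.
exists M, y, s'; rewrite -cycle_cost_peel -rotE cycle_cost_rot perm_sym.
by split; rewrite ?perm_rot // => t; rewrite mem_rot; exact: maxM.
Qed.

Lemma diag_cost_perm {s1 s2 : seq R} : perm_eq s1 s2 -> diag_cost s1 = diag_cost s2.
Proof. exact: perm_big. Qed.

Lemma diag_cost_le_cycle_cost s : {in s, forall t, in01 t} -> diag_cost s <= cycle_cost s.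
Proof.
elim: {s}(size s) {-2}s (leqnn (size s)) => [|n IH] s.
  by rewrite leqn0 => /nilP->; rewrite /diag_cost big_nil.
case: s => [|x [|y s]] sz s01; first by rewrite /diag_cost big_nil.
  by rewrite /diag_cost big_seq1 /= addr0.
have [M [y' [s' [pM le_M ->]]]] := cycle_peel_max (x :: y :: s) isT.
rewrite (diag_cost_perm pM) /diag_cost big_cons -/(diag_cost _).
have sz' : (size (y' :: s') <= n)%N by move: sz; rewrite (perm_size pM).
have [Mi s'i] := in1_cons (in1_perm pM s01).
have [_ s'_le_M] := in1_cons le_M.
have := IH _ sz' s'i.
have := monge_gap_ge0 (s'i _ (mem_last _ _)) Mi (s'i _ (mem_head _ _)) Mi
  (s'_le_M _ (mem_last _ _)) (s'_le_M _ (mem_head _ _)).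
lra.
Qed.

Lemma cycle_cost_crossing c1 c2 s : in01 c1 -> in01 c2 -> c1 < c2 ->
  {in s, forall t, in01 t} -> {in s, forall t, (t <= c1) || (c2 <= t)} ->
  has (fun t => t <= c1) s -> has (fun t => c2 <= t) s ->
  diag_cost s + monge_gap c1 c2 c1 c2 <= cycle_cost s.
Proof.
move=> c1i c2i c12; elim: {s}(size s) {-2}s (leqnn (size s)) => [|n IH] s.
  by rewrite leqn0 => /nilP->.
case: s => [|x [|y s]] sz s01 s_out lo_s hi_s //.
  by move: lo_s hi_s => /= /orP[] // x_lo /orP[] // /(lt_le_trans c12); rewrite ltNge x_lo.
have [M [y' [s' [pM le_M ->]]]] := cycle_peel_max (x :: y :: s) isT.
rewrite (diag_cost_perm pM) /diag_cost big_cons -/(diag_cost _).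
have sz' : (size (y' :: s') <= n)%N by move: sz; rewrite (perm_size pM).
have [Mi s'i] := in1_cons (in1_perm pM s01).
have [_ s'_out] := in1_cons (in1_perm pM s_out).
have [_ s'_le_M] := in1_cons le_M.
have c2_le_M : c2 <= M.
  have /hasP[t ts c2t] := hi_s; rewrite (perm_mem pM) in ts.
  exact: le_trans c2t (le_M t ts).
have lo_s' : has (fun t => t <= c1) (y' :: s').
  move: lo_s; rewrite (perm_has _ pM) /= => /orP[M_lo|//].
  by have := lt_le_trans c12 c2_le_M; rewrite ltNge M_lo.
have [hi_s'|/hasPn lo_all] := boolP (has (fun t => c2 <= t) (y' :: s')).
  have := IH _ sz' s'i s'_out lo_s' hi_s'.
  have := monge_gap_ge0 (s'i _ (mem_last _ _)) Mi (s'i _ (mem_head _ _)) Mi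
    (s'_le_M _ (mem_last _ _)) (s'_le_M _ (mem_head _ _)).
  lra.
(* Once no point above c2 is left, the peeled maximum M sits between two
   neighbours below c1 and its gap dominates that of [c1, c2]^2. *)
have s'_lo t : t \in y' :: s' -> t <= c1.
  by move=> ts; have := s'_out t ts; rewrite (negbTE (lo_all t ts)) orbF.
have := monge_gap_widen c1i c2i (s'i _ (mem_last _ _)) Mi (s'i _ (mem_head _ _)) Mi
  (s'_lo _ (mem_last _ _)) (ltW c12) c2_le_M (s'_lo _ (mem_head _ _)) c2_le_M.
have := diag_cost_le_cycle_cost _ s'i.
lra.
Qed.

Lemma diag_cost_ge {v : R} {s : seq R} :
  {in s, forall t, v <= h t t} -> (size s)%:R * v <= diag_cost s.
Proof.
elim: s => [|x s IH] v_le; first by rewrite /diag_cost big_nil mul0r.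
have [x_ge s_ge] := in1_cons v_le.
by rewrite /diag_cost big_cons -/(diag_cost s) /= mulrSr mulrDl mul1r addrC lerD ?IH.
Qed.

(* A cycle visiting both sides of a ridge [c1, c2] of the diagonal either
   stops on it or jumps over it, and pays extra in both cases. *)
Lemma cycle_cost_ridge v g c1 c2 s : in01 c1 -> in01 c2 -> c1 < c2 ->
  {in s, forall t, in01 t} -> has (fun t => t <= c1) s -> has (fun t => c2 <= t) s ->
  {in s, forall t, v <= h t t} -> {in s, forall t, c1 < t < c2 -> v + g <= h t t} ->
  (size s)%:R * v + Num.min g (monge_gap c1 c2 c1 c2) <= cycle_cost s.
Proof.
move=> c1i c2i c12 s01 lo_s hi_s v_le g_le.
have := diag_cost_le_cycle_cost _ s01.
have [/hasP[t0 t0s t0_mid]|/hasPn s_out] := boolP (has (fun t => c1 < t < c2) s).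
  have p := perm_to_rem t0s.
  rewrite (perm_size p) (diag_cost_perm p) /diag_cost big_cons -/(diag_cost _) /=.
  have [_ /diag_cost_ge] := in1_cons (in1_perm p v_le).
  have := g_le t0 t0s t0_mid; have := ge_min g g (monge_gap c1 c2 c1 c2); rewrite lexx /=.
  rewrite mulrSr mulrDl mul1r; lra.
have s_out' : {in s, forall t, (t <= c1) || (c2 <= t)}.
  by move=> t /s_out; rewrite negb_and -!leNgt orbC.
have := cycle_cost_crossing _ _ _ c1i c2i c12 s01 s_out' lo_s hi_s.
have := diag_cost_ge v_le; have := ge_min (monge_gap c1 c2 c1 c2) g (monge_gap c1 c2 c1 c2).
rewrite lexx orbT; lra.
Qed.

End MongeCycles.

Section ShiftSpace.
Context {R : realType}.
Implicit Types x y z : X R.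

Lemma xcoord_iter_shift n z i : xcoord (iter n (@Defs.shift R) z) i = xcoord z (i + n).
Proof. by elim: n i => [|n IH] i; rewrite ?addn0 // iterS /= IH addSnnS. Qed.

Lemma xcoord_in01 z i : in01 (xcoord z i).
Proof. exact: (proj2_sig z i). Qed.

Lemma X_ext x y : xcoord x =1 xcoord y -> x = y.
Proof.
case: x y => [f f01] [g g01] fg.
have /funext fgE : f =1 g by exact: fg.
by subst g; rewrite (Prop_irrelevance f01 g01).
Qed.

Let dX_term x y i : R := `|xcoord x i - xcoord y i| / 2 ^+ i.+1.

Let dX_term_ge0 x y i : 0 <= dX_term x y i.
Proof. by rewrite divr_ge0 // exprn_ge0. Qed.

Let nondecreasing_dX_partial x y : nondecreasing_seq (series (dX_term x y)).
Proof. by apply/nondecreasing_seqP => n; rewrite /series /= big_nat_recr //= lerDl. Qed.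

Lemma dX_cvg x y : cvgn (series (dX_term x y)).
Proof.
have term_le k : dX_term x y k <= (2 ^+ k.+1)^-1.
  rewrite /dX_term ler_pdivrMr ?exprn_gt0 // mulVf ?expf_neq0 //.
  have [/andP[x0 x1] /andP[y0 y1]] := (xcoord_in01 x k, xcoord_in01 y k).
  by rewrite ler_norml; apply/andP; split; lra.
apply: nondecreasing_is_cvgn => //.
exists 1 => _ [n _ <-]; have : 0 < (2 ^+ n : R)^-1 by rewrite invr_gt0 exprn_gt0.
suff : series (dX_term x y) n <= 1 - (2 ^+ n)^-1 by lra.
elim: n => [|n IH]; first by rewrite /series /= big_geq // expr0 invr1 subrr.
rewrite /series /= big_nat_recr //=; have := term_le n; move: IH.
rewrite /series /= exprS invfM; lra.
Qed.

Lemma xcoord_le_dX x y i : `|xcoord x i - xcoord y i| / 2 ^+ i.+1 <= dX x y.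
Proof.
apply: le_trans (nondecreasing_cvgn_le (nondecreasing_dX_partial x y) (dX_cvg x y) i.+1).
by rewrite /series /= big_nat_recr //= lerDr sumr_ge0.
Qed.

Lemma xcoord0_le_dX x y : `|xcoord x 0 - xcoord y 0| <= 2 * dX x y.
Proof. by have := xcoord_le_dX x y 0; rewrite expr1; lra. Qed.

Lemma xcoord1_le_dX x y : `|xcoord x 1 - xcoord y 1| <= 4 * dX x y.
Proof. by have := xcoord_le_dX x y 1; rewrite expr2; lra. Qed.

Lemma Bset_xcoord {x y z n} {e : R} : Bset x y n e z ->
  `|xcoord x 0 - xcoord z 0| < 2 * e /\ `|xcoord z n - xcoord y 0| < 2 * e.
Proof.
move=> [xz zy]; have := xcoord0_le_dX (iter n (@Defs.shift R) z) y.
by rewrite xcoord_iter_shift add0n; have := xcoord0_le_dX x z; lra.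
Qed.

Definition orbit_path z n : seq R := [seq xcoord z i | i <- iota 1 n].

Lemma last_orbit_path z n : last (xcoord z 0) (orbit_path z n) = xcoord z n.
Proof.
have last_iota k : last k (iota k.+1 n) = (k + n)%N.
  by elim: n k => [|n IH] k; rewrite ?addn0 //= IH addnS.
by rewrite /orbit_path last_map last_iota.
Qed.

End ShiftSpace.

Section MinimizingValue.
Context {R : realType}.

Lemma alpha_le_fixed_point {phi : X R -> R} {x : X R} {K : R} :
  measurable_fun [set: XB R] (phi : XB R -> R) -> (forall z, `|phi z| <= K) ->
  Defs.shift x = x -> alpha phi <= phi x.
Proof.
move=> phi_meas phi_le fix_x; rewrite /alpha.
set S := [set _ | _ in _].
have mphi : measurable_fun [set: XB R] (fun z : XB R => (phi z)%:E).
  exact/measurable_EFinP.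
(* [alpha] takes [fine] of an infimum, which is 0 if that infimum is -oo:
   boundedness of phi is what makes the infimum finite. *)
have int_ge (mu : probability (XB R) R) :
    ((- K)%:E <= \int[mu]_(z in [set: XB R]) (phi z)%:E)%E.
  rewrite EFinN leeNl; apply: le_trans (lee_abs _) _; rewrite abseN.
  apply: le_trans (le_abse_integral _ measurableT mphi) _.
  apply: le_trans (_ : (_ <= \int[mu]_(z in [set: XB R]) (cst K%:E) z)%E) _.
    by apply: ge0_le_integral => //; [exact: measurableT_comp|move=> z _; rewrite lee_fin].
  rewrite integral_cst //; set muT := (M in (_ * M)%E).
  have -> : muT = 1%E by exact: probability_setT.
  by rewrite mule1.
pose delta_x : probability (XB R) R := @dirac _ (XB R) x R.
have inv_delta_x : Defs.invariant delta_x.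
  by move=> A _; rewrite /delta_x /= !diracE -{2}fix_x.
have S_le : (ereal_inf S <= (phi x)%:E)%E.
  apply: ereal_inf_lbound; exists delta_x => //.
  by rewrite /delta_x integral_dirac // diracE in_setT mul1e.
have S_ge : ((- K)%:E <= ereal_inf S)%E by apply: le_ereal_inf_tmp => _ [mu _ <-].
have S_fin : ereal_inf S \is a fin_num.
  by rewrite fin_numElt (lt_le_trans (ltNyr _) S_ge) (le_lt_trans S_le (ltry _)).
by rewrite -lee_fin fineK.
Qed.

Lemma dX_lipschitz_measurable {phi : X R -> R} {L : R} : 0 < L ->
  (forall x z, `|phi x - phi z| <= L * dX x z) ->
  measurable_fun [set: XB R] (phi : XB R -> R).
Proof.
move=> L_gt0 phi_lip.
apply: (measurability _ (RGenOInfty.measurableE R)) => //.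
move=> _ [_ [r ->] <-]; rewrite setTI; apply: sub_sigma_algebra.
move=> x /=; rewrite in_itv /= andbT => r_lt.
exists ((phi x - r) / L); first by rewrite divr_gt0 // subr_gt0.
move=> z; rewrite /= in_itv /= andbT ltr_pdivlMr // => near_z.
by have := phi_lip x z; rewrite ler_norml => /andP[_]; lra.
Qed.

End MinimizingValue.

Section PeierlsBarrier.
Context {R : realType}.
Variable phi : X R -> R.

Definition orbit_action (z : X R) (n : nat) : R :=
  \sum_(0 <= i < n) (phi (iter i (@Defs.shift R) z) - alpha phi).

Lemma le_limn_einf (u v : (\bar R)^nat) : (forall n, (u n <= v n)%E) ->
  (limn_einf u <= limn_einf v)%E.
Proof.
move=> uv; rewrite !limn_einf_lim; apply: lee_lim; try exact: is_cvg_einfs.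
apply: nearW => n; apply: le_ereal_inf_tmp => _ [k kn <-].
by apply: le_trans (uv k); apply: ereal_inf_lbound; exists k.
Qed.

Lemma limn_einf_lt (u : (\bar R)^nat) t : (limn_einf u < t)%E -> exists n, (u n < t)%E.
Proof.
have : (einfs u 0%N <= limn_einf u)%E.
  rewrite limn_einf_lim; apply: lime_ge; first exact: is_cvg_einfs.
  by apply: nearW => n; apply: nondecreasing_einfs.
move=> /le_lt_trans lt_u /lt_u /ereal_inf_lt[_ [k _ <-]] ukt.
by exists k.
Qed.

Lemma le_Binf (x y : X R) (e1 e2 : R) n : e1 <= e2 ->
  (Binf phi x y e2 n <= Binf phi x y e1 n)%E.
Proof.
move=> e12; apply: ereal_inf_le_tmp => _ [z [d1 d2] <-]; exists z => //.
by split; apply: lt_le_trans e12.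
Qed.

Lemma limn_einf_Binf_le_peierls (x y : X R) (e : R) : 0 < e ->
  (limn_einf (Binf phi x y e) <= peierls phi x y)%E.
Proof.
move=> e_gt0; rewrite /peierls.
set P := fun eps : R => limn_einf (Binf phi x y eps).
have P_nonincr : {in `]0, +oo[ &, nonincreasing_fun P}.
  by move=> s t _ _ st; apply: le_limn_einf => n; exact: le_Binf.
apply: lime_ge; first exact: cvgP (@nonincreasing_at_right_cvge _ P 0 +oo%O isT P_nonincr).
near=> t; apply: le_limn_einf => n; apply: le_Binf.
by near: t; exact: nbhs_right_le.
Unshelve. all: by end_near.
Qed.

Lemma peierls_add_neq0 {x y : X R} {e d : R} : 0 < e -> 0 < d ->
  (forall n m z w, Bset x y n e z -> Bset y x m e w ->
     d <= orbit_action z n + orbit_action w m) ->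
  (peierls phi x y + peierls phi y x != 0)%E.
Proof.
move=> e_gt0 d_gt0 action_ge.
have near_action x' y' r : peierls phi x' y' = r%:E ->
    exists n z, Bset x' y' n e z /\ orbit_action z n < r + d / 4.
  move=> Exy; have /limn_einf_lt[n] : (limn_einf (Binf phi x' y' e) < (r + d / 4)%:E)%E.
    apply: le_lt_trans (limn_einf_Binf_le_peierls x' y' e e_gt0) _.
    by rewrite Exy lte_fin ltrDl divr_gt0.
  by move=> /ereal_inf_lt[_ [z zB <-]]; rewrite lte_fin => ?; exists n, z.
apply/negP => /eqP sum0.
have : (peierls phi x y + peierls phi y x)%E \is a fin_num by rewrite sum0.
rewrite fin_numD => /andP[xy_fin yx_fin].
have [rxy Exy] : exists r, peierls phi x y = r%:E.
  by exists (fine (peierls phi x y)); rewrite fineK.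
have [ryx Eyx] : exists r, peierls phi y x = r%:E.
  by exists (fine (peierls phi y x)); rewrite fineK.
move: sum0 => /eqP; rewrite Exy Eyx -EFinD eqe => /eqP sum0.
have [n [z [zB z_lt]]] := near_action x y rxy Exy.
have [m [w [wB w_lt]]] := near_action y x ryx Eyx.
by have := action_ge n m z w zB wB; lra.
Qed.

End PeierlsBarrier.

Section PhiOf.
Context {R : realType} (h : R -> R -> R).
Hypothesis h_lip : lipschitz01 h.

Definition lipschitz01_with (L : R) : Prop :=
  forall x1 y1 x2 y2, in01 x1 -> in01 y1 -> in01 x2 -> in01 y2 ->
    `|h x1 y1 - h x2 y2| <= L * (`|x1 - x2| + `|y1 - y2|).

Lemma lipschitz01_pos : exists2 L, 0 < L & lipschitz01_with L.
Proof.
have [L hL] := h_lip; exists (`|L| + 1); first by rewrite ltr_pwDr.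
move=> x1 y1 x2 y2 x1i y1i x2i y2i; apply: le_trans (hL _ _ _ _ x1i y1i x2i y2i) _.
by rewrite ler_wpM2r ?addr_ge0 // (le_trans (ler_norm L)) // lerDl.
Qed.

Lemma phi_of_bounded : exists K, forall x : X R, `|phi_of h x| <= K.
Proof.
have [L L_gt0 hL] := lipschitz01_pos; exists (`|h 0 0| + 2 * L) => x; rewrite /phi_of.
have i0 : in01 (0 : R) by rewrite /in01 lexx ler01.
have := hL _ _ _ _ (xcoord_in01 x 0) (xcoord_in01 x 1) i0 i0; rewrite !subr0.
have [/andP[x00 x01] /andP[x10 x11]] := (xcoord_in01 x 0, xcoord_in01 x 1).
have : L * (`|xcoord x 0| + `|xcoord x 1|) <= L * 2.
  by apply: (ler_wpM2l (ltW L_gt0)); rewrite !ger0_norm //; lra.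
have := ler_normD (h (xcoord x 0) (xcoord x 1) - h 0 0) (h 0 0); rewrite subrK.
lra.
Qed.

Lemma phi_of_lipschitz : exists2 L, 0 < L &
  forall x z : X R, `|phi_of h x - phi_of h z| <= L * dX x z.
Proof.
have [L L_gt0 hL] := lipschitz01_pos; exists (6 * L) => [|x z]; first by rewrite mulr_gt0.
have := hL _ _ _ _ (xcoord_in01 x 0) (xcoord_in01 x 1) (xcoord_in01 z 0) (xcoord_in01 z 1).
have : L * (`|xcoord x 0 - xcoord z 0| + `|xcoord x 1 - xcoord z 1|) <= L * (6 * dX x z).
  apply: (ler_wpM2l (ltW L_gt0)).
  by have := xcoord0_le_dX x z; have := xcoord1_le_dX x z; lra.
rewrite /phi_of; lra.
Qed.

Lemma alpha_phi_of_le {a : R} {ainf : X R} : (forall i, xcoord ainf i = a) ->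
  alpha (phi_of h) <= h a a.
Proof.
move=> ainfE; have [K phi_le] := phi_of_bounded; have [L L_gt0 phi_lip] := phi_of_lipschitz.
have fix_ainf : Defs.shift ainf = ainf by apply: X_ext => i; rewrite /= !ainfE.
have := alpha_le_fixed_point (dX_lipschitz_measurable L_gt0 phi_lip) phi_le fix_ainf.
by rewrite /phi_of !ainfE.
Qed.

Lemma orbit_action_phi_of z n : orbit_action (phi_of h) z n.+1 =
  path_cost h (xcoord z 0) (orbit_path z n) + h (xcoord z n) (xcoord z n.+1)
  - n.+1%:R * alpha (phi_of h).
Proof.
rewrite /orbit_action sumrB sumr_const_nat subn0 mulr_natl big_nat_recr //=.
rewrite /orbit_path (path_cost_map_iota h (xcoord z) 0) add0n.
have phi_ofE i : phi_of h (iter i (@Defs.shift R) z) = h (xcoord z i) (xcoord z i.+1).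
  by rewrite /phi_of !xcoord_iter_shift add0n add1n.
by rewrite phi_ofE (eq_bigr _ (fun i _ => phi_ofE i)).
Qed.

Lemma cycle_cost_orbit_paths z w n m :
  cycle_cost h (xcoord z 0 :: orbit_path z n ++ xcoord w 0 :: orbit_path w m) =
  path_cost h (xcoord z 0) (orbit_path z n) + h (xcoord z n) (xcoord w 0)
  + path_cost h (xcoord w 0) (orbit_path w m) + h (xcoord w m) (xcoord z 0).
Proof. by rewrite cycle_cost_cat2 !last_orbit_path. Qed.

End PhiOf.

Section Barrier.
Context {R : realType} (h : R -> R -> R).
Hypotheses (hH3 : H3 h) (h_lip : lipschitz01 h).

Lemma diag_ridge {a b c : R} : a < c -> c < b -> in01 c -> h a a < h c c ->
  exists c1 c2 g, [/\ a < c1, c1 < c2, c2 < b, 0 < g &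
    forall t, in01 t -> c1 < t < c2 -> h a a + g <= h t t].
Proof.
move=> ac cb c01 hac; have [L L_gt0 hL] := lipschitz01_pos h h_lip.
pose g := (h c c - h a a) / 2.
pose r := Num.min (Num.min ((c - a) / 2) ((b - c) / 2)) (g / (2 * L)).
have g_gt0 : 0 < g by rewrite divr_gt0 // subr_gt0.
have r_ca : r <= (c - a) / 2 by rewrite /r !ge_min lexx.
have r_bc : r <= (b - c) / 2 by rewrite /r !ge_min lexx orbT.
have r_g : r <= g / (2 * L) by rewrite /r ge_min lexx orbT.
have r_gt0 : 0 < r by rewrite /r !lt_min !divr_gt0 ?subr_gt0 ?mulr_gt0.
rewrite ler_pdivlMr ?mulr_gt0 // in r_g.
exists (c - r), (c + r), g; split => //; try lra.
move=> t t01 /andP[ct tc].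
have tc_r : `|t - c| <= r by rewrite ler_norml; apply/andP; split; lra.
have := hL _ _ _ _ t01 t01 c01 c01; rewrite ler_norml => /andP[+ _].
have : L * `|t - c| <= L * r by apply: (ler_wpM2l (ltW L_gt0)).
rewrite /g in r_g *; lra.
Qed.

Lemma lipschitz_closing_edge {L x y y' d : R} : 0 <= L -> lipschitz01_with h L ->
  in01 x -> in01 y -> in01 y' -> `|y' - y| <= d -> h x y - L * d <= h x y'.
Proof.
move=> L_ge0 hL x01 y01 y'01 yy'.
have := hL _ _ _ _ x01 y'01 x01 y01; rewrite subrr normr0 add0r ler_norml => /andP[+ _].
have : L * `|y' - y| <= L * d by exact: ler_wpM2l.
lra.
Qed.

(* Redirecting the last edge of each segment to the start of the other one
   closes them into a cycle, at a cost of at most 4 L e per edge. *)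
Lemma orbit_actions_ge {a b c1 c2 g L e : R} {ainf binf z w : X R} {n m : nat} :
  m_h h a -> in01 b -> c1 < c2 -> a + 2 * e <= c1 -> c2 + 2 * e <= b ->
  (forall t, in01 t -> c1 < t < c2 -> h a a + g <= h t t) ->
  0 <= L -> lipschitz01_with h L ->
  (forall i, xcoord ainf i = a) -> (forall i, xcoord binf i = b) ->
  Bset ainf binf n e z -> Bset binf ainf m e w ->
  Num.min g (monge_gap h c1 c2 c1 c2) - 8 * L * e <=
    orbit_action (phi_of h) z n + orbit_action (phi_of h) w m.
Proof.
move=> [a01 a_min] b01 c12 a_c1 c2_b g_le L_ge0 hL ainfE binfE zB wB.
have [] := Bset_xcoord zB; have [] := Bset_xcoord wB; rewrite !ainfE !binfE !ltr_norml.
move=> /andP[w0_lo w0_hi] /andP[wm_lo wm_hi] /andP[z0_lo z0_hi] /andP[zn_lo zn_hi].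
have [/andP[a0 a1] /andP[b0 b1]] := (a01, b01).
have c1_01 : in01 c1 by apply/andP; split; lra.
have c2_01 : in01 c2 by apply/andP; split; lra.
case: n zB zn_lo zn_hi => [|n] zB zn_lo zn_hi; first lra.
case: m wB wm_lo wm_hi => [|m] wB wm_lo wm_hi; first lra.
pose s := xcoord z 0 :: orbit_path z n ++ xcoord w 0 :: orbit_path w m.
have s01 t : t \in s -> in01 t.
  rewrite /s /orbit_path in_cons mem_cat in_cons.
  by case/or4P => [/eqP->|/mapP[i _ ->]|/eqP->|/mapP[i _ ->]]; exact: xcoord_in01.
have lo_s : has (fun t => t <= c1) s.
  by apply/hasP; exists (xcoord z 0); rewrite ?mem_head //; lra.
have hi_s : has (fun t => c2 <= t) s.
  by apply/hasP; exists (xcoord w 0); rewrite /s ?in_cons ?mem_cat ?mem_head ?orbT //; lra.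
have := @cycle_cost_ridge _ h hH3 (h a a) g c1 c2 s c1_01 c2_01 c12 s01 lo_s hi_s
  (fun t ts => a_min t (s01 t ts)) (fun t ts => g_le t (s01 t ts)).
have -> : (size s)%:R = n.+1%:R + m.+1%:R :> R.
  by rewrite /s /= size_cat /= !size_map !size_iota -natrD addSn.
rewrite cycle_cost_orbit_paths !orbit_action_phi_of.
have zw : `|xcoord z n.+1 - xcoord w 0| <= 4 * e by rewrite ler_norml; apply/andP; split; lra.
have wz : `|xcoord w m.+1 - xcoord z 0| <= 4 * e by rewrite ler_norml; apply/andP; split; lra.
have := lipschitz_closing_edge L_ge0 hL (xcoord_in01 z n) (xcoord_in01 w 0)
  (xcoord_in01 z n.+1) zw.
have := lipschitz_closing_edge L_ge0 hL (xcoord_in01 w m) (xcoord_in01 z 0)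
  (xcoord_in01 w m.+1) wz.
have al := alpha_phi_of_le h h_lip ainfE.
have := ler_wpM2l (ler0n R n.+1) al; have := ler_wpM2l (ler0n R m.+1) al.
lra.
Qed.

Lemma peierls_add_neq0_of_ridge {a b c : R} {ainf binf : X R} :
  m_h h a -> m_h h b -> a < c -> c < b -> h a a < h c c ->
  (forall i, xcoord ainf i = a) -> (forall i, xcoord binf i = b) ->
  (peierls (phi_of h) ainf binf + peierls (phi_of h) binf ainf != 0)%E.
Proof.
move=> ma [b01 _] ac cb hac ainfE binfE.
have [/andP[a0 _] /andP[_ b1]] := (ma.1, b01).
have c01 : in01 c by apply/andP; split; lra.
have [c1 [c2 [g [ac1 c12 c2b g_gt0 g_le]]]] := diag_ridge ac cb c01 hac.
have [L L_gt0 hL] := lipschitz01_pos h h_lip.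
have c1_01 : in01 c1 by apply/andP; split; lra.
have c2_01 : in01 c2 by apply/andP; split; lra.
pose d := Num.min g (monge_gap h c1 c2 c1 c2).
have d_gt0 : 0 < d by rewrite lt_min g_gt0 monge_gap_gt0.
pose e := Num.min (Num.min ((c1 - a) / 2) ((b - c2) / 2)) (d / (16 * L)).
have e_gt0 : 0 < e by rewrite !lt_min !divr_gt0 ?subr_gt0 ?mulr_gt0.
have e_c1 : e <= (c1 - a) / 2 by rewrite /e !ge_min lexx.
have e_c2 : e <= (b - c2) / 2 by rewrite /e !ge_min lexx orbT.
have e_d : e * (16 * L) <= d by rewrite -ler_pdivlMr ?mulr_gt0 // /e ge_min lexx orbT.
have d2_gt0 : 0 < d / 2 by rewrite divr_gt0.
apply: (peierls_add_neq0 _ e_gt0 d2_gt0) => n m z w zB wB.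
have a_c1 : a + 2 * e <= c1 by lra.
have c2_b : c2 + 2 * e <= b by lra.
have := orbit_actions_ge ma b01 c12 a_c1 c2_b g_le (ltW L_gt0) hL ainfE binfE zB wB.
rewrite -/d; lra.
Qed.

End Barrier.

(* If the diagonal stayed at its minimum on [a, b], this segment would be a
   connected subset of m_h joining a and b. *)
Lemma disconnected_m_h_gap {R : realType} {h : R -> R -> R} {a b : R} :
  m_h h a -> m_h h b -> a < b -> ~ connected_component (m_h h) a b ->
  exists c, [/\ a < c, c < b & h a a < h c c].
Proof.
move=> [a01 a_min] [b01 b_min] ab not_conn; apply: contrapT => no_gap; apply: not_conn.
have [/andP[a0 _] /andP[_ b1]] := (a01, b01).
exists `[a, b]%classic; last by rewrite /= in_itv /= lexx ltW.
split; [by rewrite /= in_itv /= lexx ltW| |exact: segment_connected].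
move=> t; rewrite /= in_itv /= => /andP[a_t t_b].
have t01 : in01 t by apply/andP; split; lra.
split=> // s s01; rewrite leNgt; apply/negP => lt_s; apply: no_gap; exists t.
have lt_a : h a a < h t t by have := a_min s s01; lra.
split => //.
  by rewrite lt_neqAle a_t andbT; apply: contraTneq lt_a => <-; rewrite ltxx.
by rewrite lt_neqAle t_b andbT; apply: contraTneq lt_s => ->; rewrite -leNgt b_min.
Qed.

Theorem theorem4p1 (R : realType) (h : R -> R -> R) (a b : R) (ainf binf : X R) :
  classH h ->
  m_h h a -> m_h h b ->
  ~ connected_component (m_h h) a b ->
  (forall i, xcoord ainf i = a) -> (forall i, xcoord binf i = b) ->
  (peierls (phi_of h) ainf binf + peierls (phi_of h) binf ainf != 0)%E.
Proof.
move=> [h_lip [hH3 _]] ma mb not_conn ainfE binfE.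
have [ab|ba|eq_ab] := ltgtP a b.
- have [c [ac cb hac]] := disconnected_m_h_gap ma mb ab not_conn.
  exact (peierls_add_neq0_of_ridge h hH3 h_lip ma mb ac cb hac ainfE binfE).
- have not_conn' : ~ connected_component (m_h h) b a by move/connected_component_sym.
  have [c [bc ca hbc]] := disconnected_m_h_gap mb ma ba not_conn'.
  rewrite addeC; exact (peierls_add_neq0_of_ridge h hH3 h_lip mb ma bc ca hbc binfE ainfE).
- by case: not_conn; rewrite eq_ab; exact: connected_component_refl.
Qed.
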